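(* Let $x\in\mathbb{R}$ and let $\theta\colon[x,+\infty)\to\mathbb{R}$ be a continuous sublinear function. If $y$ is a real number with $y<\theta(t)$ for every $t\in[x,+\infty)$, then the set $$E(x,y,\theta)=\left\{t>x\ \middle|\ \forall s\in[x,t],\ \theta(s)\ge\frac{\theta(t)-y}{t-x}(s-x)+y\right\}$$ is not bounded above.
   Context: A function $\theta$ is sublinear if $\theta(t)=o(t)$ as $t\to+\infty$. *)

From HB Require Import structures.
From mathcomp Require Import all_boot all_order all_algebra.
From mathcomp Require Import all_classical all_reals all_analysis.
Set Implicit Arguments. Unset Strict Implicit. Unset Printing Implicit Defensive.
Import Order.TTheory GRing.Theory Num.Theory.
Import numFieldNormedType.Exports.
Local Open Scope classical_set_scope.
Local Open Scope ring_scope.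

Definition Eset (R : realType) (x y : R) (theta : R -> R) : set R :=
  [set t | x < t /\
     forall s, x <= s <= t -> (theta t - y) / (t - x) * (s - x) + y <= theta s].

From HB Require Import structures.
From mathcomp Require Import all_boot all_order all_algebra.
From mathcomp Require Import all_classical all_reals all_analysis.
From mathcomp Require Import lra.
Import Order.TTheory GRing.Theory Num.Theory.
Import numFieldNormedType.Exports.
Local Open Scope classical_set_scope.
Local Open Scope ring_scope.

(* Given a bound M, pick b > M.  On [x, b] the function theta - y is bounded
   below by a positive constant, hence lies above a line of some slope a > 0
   through (x, y).  Sublinearity yields T > b whose secant slope from (x, y)
   is below a.  A point t of [b, T] minimising the secant slope then lies in
   E(x, y, theta): on [x, b] its chord stays below the line of slope a, and on
   [b, t] below theta by minimality.  So t > M lies in E. *)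

Section LinearBounds.
Set Implicit Arguments.
Unset Strict Implicit.
Variable R : realType.

Lemma linear_minorant (f : R -> R) (x b y : R) :
  x < b -> {within `[x, b], continuous f} ->
  (forall s, x <= s <= b -> y < f s) ->
  exists2 a, 0 < a & forall s, x <= s <= b -> a * (s - x) + y <= f s.
Proof.
move=> xb fcont f_gt_y.
have [c cxb cmin] := EVT_min (ltW xb) fcont.
have /andP[xc cb] : x <= c <= b by rewrite in_itv /= in cxb.
have fc_gt_y : y < f c by apply: f_gt_y; rewrite xc cb.
exists ((f c - y) / (b - x)); first by rewrite divr_gt0 ?subr_gt0.
move=> s /andP[xs sb].
have fc_le_fs : f c <= f s by apply: cmin; rewrite in_itv /= xs sb.
have : (f c - y) / (b - x) * (s - x) <= f c - y.
  by rewrite mulrAC ler_pdivrMr ?subr_gt0 // ler_wpM2l ?subr_ge0 ?lerD2r // ltW.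
lra.
Qed.

Lemma sublinear_lt_line (f : R -> R) (a k : R) : 0 < a ->
  f t / t @[t --> +oo] --> 0 -> \forall t \near +oo, f t < a * t + k.
Proof.
move=> a_gt0 /cvgr0Pnorm_lt f_small.
have a2_gt0 : 0 < a / 2 by rewrite divr_gt0.
near=> t.
have t_gt0 : 0 < t by near: t; exact: nbhs_pinfty_gt.
have ft_lt : f t < a / 2 * t.
  rewrite -ltr_pdivrMr //; apply: le_lt_trans (ler_norm _) _.
  by near: t; exact: f_small.
have : - k / (a / 2) < t by near: t; exact: nbhs_pinfty_gt (num_real _).
rewrite ltr_pdivrMr // => kt; lra.
Unshelve. all: by end_near.
Qed.

End LinearBounds.

Section SecantSlope.
Set Implicit Arguments.
Unset Strict Implicit.
Variables (R : realType) (x y : R) (theta : R -> R).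

Definition secant_slope t := (theta t - y) / (t - x).

Lemma secant_slopeK t : x < t -> secant_slope t * (t - x) + y = theta t.
Proof. by move=> xt; rewrite /secant_slope divfK ?subr_eq0 ?gt_eqF // subrK. Qed.

Lemma secant_slope_lt a t : x < t ->
  (secant_slope t < a) = (theta t < a * (t - x) + y).
Proof. by move=> xt; rewrite /secant_slope ltr_pdivrMr ?subr_gt0 // ltrBlDr. Qed.

Lemma secant_slope_continuous b T : x < b ->
  {within `[x, +oo[, continuous theta} -> {within `[b, T], continuous secant_slope}.
Proof.
move=> xb /continuous_within_itvcyP[theta_cont _].
apply: continuous_subspace_itv => t; rewrite in_itv /= => /andP[bt _].
have xt : x < t by apply: lt_le_trans bt.
apply: cvgM; first by apply: cvgB (cvg_cst _); apply: theta_cont; rewrite in_itv /= xt.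
by apply: cvgV; [rewrite subr_eq0 gt_eqF | apply: cvgB cvg_id (cvg_cst _)].
Qed.

Lemma Eset_secant_argmin a b t : x < b -> b <= t ->
  (forall s, x <= s <= b -> a * (s - x) + y <= theta s) ->
  secant_slope t <= a ->
  (forall s, b <= s <= t -> secant_slope t <= secant_slope s) ->
  Eset x y theta t.
Proof.
move=> xb bt above_line slope_le_a slope_min.
have xt : x < t by apply: lt_le_trans bt.
split=> // s /andP[xs st]; rewrite -/(secant_slope t).
have [sb | bs] := leP s b.
- apply: le_trans (above_line s _); last by rewrite xs sb.
  by rewrite lerD2r ler_wpM2r ?subr_ge0.
- rewrite -(secant_slopeK (lt_trans xb bs)) lerD2r ler_wpM2r ?subr_ge0 //.
  by apply: slope_min; rewrite st ltW.
Qed.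

End SecantSlope.

Theorem lemma3p1 (R : realType) (x y : R) (theta : R -> R)
  (hcont : {within `[x, +oo[, continuous theta})
  (hsub : theta t / t @[t --> +oo] --> 0)
  (hy : forall t, x <= t -> y < theta t) :
  ~ has_ubound (Eset x y theta).
Proof.
move=> [M M_ub].
pose b := Num.max M x + 1.
have [xb Mb] : x < b /\ M < b by split; apply: ltr_pwDr; rewrite // le_max lexx ?orbT.
have [a a_gt0 above_line] : exists2 a, 0 < a &
    forall s, x <= s <= b -> a * (s - x) + y <= theta s.
  apply: linear_minorant => // [|s /andP[xs _]]; last exact: hy.
  by apply: continuous_subspaceW hcont => s; rewrite /= !in_itv /= => /andP[->].
have [T [/= lt_line bT]] := filter_ex (filterI
  (sublinear_lt_line (y - a * x) a_gt0 hsub) (nbhs_pinfty_gt (num_real b))).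
have slopeT : secant_slope x y theta T < a.
  by rewrite secant_slope_lt ?(lt_trans xb) //; lra.
have [t tbT t_min] := EVT_min (ltW bT) (secant_slope_continuous (y := y) xb hcont).
have /andP[bt tT] : b <= t <= T by rewrite in_itv /= in tbT.
suff : t <= M by lra.
apply: M_ub; apply: (Eset_secant_argmin xb bt above_line).
  by apply: le_trans (ltW slopeT); apply: t_min; rewrite in_itv /= (ltW bT) lexx.
by move=> s /andP[bs st]; apply: t_min; rewrite in_itv /= bs (le_trans st tT).
Qed.
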